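(* Let $\mathcal{X}$ be a real vector space and $\mathcal{C}$ a family of subsets of $\mathcal{X}$ such that every $C\in\mathcal{C}$ is a symmetric, algebraically open, convex set containing $0$ for which the locally convex topology $\tau_C$ generated by $C$ is separable. Let $\tau(\mathcal{C})$ be the locally convex topology on $\mathcal{X}$ for which $\mathcal{C}_0$ is a local basis at $0$, and let $\mathcal{F}(\mathcal{C})=\sigma\big(\bigcup_{x\in\mathcal{X}}\mathcal{C}_x\big)$. Then $(\mathcal{X},\tau(\mathcal{C}),\mathcal{F}(\mathcal{C}))$ satisfies: (LM1) every point admits a local basis of neighborhoods consisting of $\mathcal{F}(\mathcal{C})$-measurable sets; (LM2) every $\tau(\mathcal{C})$-continuous linear functional is $\mathcal{F}(\mathcal{C})$-measurable; (LM3) the addition $(x,y)\mapsto x+y$ is measurable from $(\mathcal{X}^2,\mathcal{F}(\mathcal{C})\otimes\mathcal{F}(\mathcal{C}))$ to $(\mathcal{X},\mathcal{F}(\mathcal{C}))$; (LM4) $\mathcal{F}(\mathcal{C})$ is invariant under dilations $x\mapsto tx$, $t\neq0$.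
   Context: A set $C\subset\mathcal{X}$ is algebraically open if for every $x\in C$ and $y\in\mathcal{X}$ there is $\varepsilon>0$ with $x+ty\in C$ for $|t|<\varepsilon$. For such symmetric convex $C\ni0$, its Minkowski functional $M_C$ is a seminorm and $\tau_C$ is the topology induced by $M_C$. For $x\in\mathcal{X}$, $\mathcal{C}_x=\{x+\bigcap_{i=1}^r\lambda_iC_i : r\ge0,\ C_i\in\mathcal{C},\ \lambda_i>0\}$. *)

From HB Require Import structures.
From mathcomp Require Import all_boot all_order all_algebra.
From mathcomp Require Import all_classical all_reals.
From mathcomp Require Import topology normedtype measure.
Set Implicit Arguments. Unset Strict Implicit. Unset Printing Implicit Defensive.
Import Order.TTheory GRing.Theory Num.Theory.
Import numFieldNormedType.Exports.
Local Open Scope classical_set_scope.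
Local Open Scope ring_scope.

Section Defs.
Variables (R : realType) (X : lmodType R).

Definition symmetric_set (C : set X) : Prop := forall x, C x -> C (- x).

Definition alg_open (C : set X) : Prop :=
  forall x y, C x -> exists2 e : R, 0 < e & forall t : R, `|t| < e -> C (x + t *: y).

Definition convex_set (C : set X) : Prop :=
  forall x y (t : R), 0 <= t -> t <= 1 -> C x -> C y -> C (t *: x + (1 - t) *: y).

Definition scale_set (l : R) (C : set X) : set X := [set l *: z | z in C].

Definition minkowski (C : set X) (x : X) : R :=
  inf [set l : R | 0 < l /\ scale_set l C x].

(* the seminorm topology tau_C is separable: it has a countable dense subset
   (density w.r.t. the topology induced by the seminorm M_C) *)
Definition tauC_separable (C : set X) : Prop :=
  exists D : set X, countable D /\
    forall x (e : R), 0 < e -> exists2 d, D d & minkowski C (x - d) < e.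

Definition Cfam (CC : set (set X)) (x : X) : set (set X) :=
  [set V | exists (r : nat) (Cs : 'I_r -> set X) (l : 'I_r -> R),
     (forall i, CC (Cs i)) /\ (forall i, 0 < l i) /\
     V = [set x + y | y in \bigcap_(i in [set: 'I_r]) scale_set (l i) (Cs i)]].

(* neighborhoods of x in tau(CC): sets containing a member of C_x
   (C_0 is a local basis at 0, hence C_x = x + C_0 one at x) *)
Definition tau_nbhs (CC : set (set X)) (x : X) (W : set X) : Prop :=
  exists2 V, Cfam CC x V & V `<=` W.

Definition FC (CC : set (set X)) : set (set X) :=
  <<s \bigcup_(x in [set: X]) Cfam CC x >>.

Definition prod_sigma (F G : set (set X)) : set (set (X * X)) :=
  <<s [set A `*` B | A in F & B in G] >>.

End Defs.

Definition borelR (R : realType) : set (set R) := <<s [set U : set R | open U] >>.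

(* If every tau_{C_i} is separable, the sets  /\_i (c_i + (n+1)^-1 l_i C_i)
   with each centre c_i taken from a countable tau_{C_i}-dense set form a
   countable family, and a set containing such a ball (centred at y) around each
   of its points y is the union of those grid balls it contains, so it lies in
   F(C).  Preimages of open sets under a continuous linear functional, and
   preimages of generators under addition (in X x X), are of this kind; passing
   to generated sigma-algebras gives (LM2) and (LM3).  A dilation by t maps C_x
   onto C_(tx), which gives (LM4). *)

From HB Require Import structures.
From mathcomp Require Import all_boot all_order all_algebra.
From mathcomp Require Import all_classical all_reals.
From mathcomp Require Import topology normedtype measure.
From mathcomp Require Import lra.
Set Implicit Arguments. Unset Strict Implicit. Unset Printing Implicit Defensive.
Import Order.TTheory GRing.Theory Num.Theory.
Import numFieldNormedType.Exports.
Local Open Scope classical_set_scope.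
Local Open Scope ring_scope.

Section SigmaAlgebra.
Variables (T : Type) (G : set (set T)).

Lemma sigma_algebra_countable_bigcup (I : countType) (P : set I) (F : I -> set T) :
  (forall i, P i -> <<s G >> (F i)) -> <<s G >> (\bigcup_(i in P) F i).
Proof.
move=> PF.
pose H n := if pickle_inv n is Some i then (if `[< P i >] then F i else set0)
            else set0.
have -> : \bigcup_(i in P) F i = \bigcup_n H n.
  apply/seteqP; split => [z [i Pi Fz]|z [n _]].
    by exists (pickle i) => //; rewrite /H pickleK_inv asboolT.
  by rewrite /H; case: (pickle_inv n) => // i; case: asboolP => // Pi Fz; exists i.
apply: sigma_algebra_bigcup => n; rewrite /H.
case: (pickle_inv n) => [i|]; last exact: sigma_algebra0.
by case: asboolP => [/PF//|_]; exact: sigma_algebra0.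
Qed.

Lemma sigma_algebra_countable_bigcap (I : countType) (F : I -> set T) :
  (forall i, <<s G >> (F i)) -> <<s G >> (\bigcap_i F i).
Proof.
move=> hF; rewrite -[X in <<s G >> X]setCK setC_bigcap -setTD.
apply: sigma_algebraCD; apply: sigma_algebra_countable_bigcup => i _.
by rewrite -setTD; apply: sigma_algebraCD.
Qed.

End SigmaAlgebra.

Lemma preimage_smallest_sigma (T U : Type) (S : set (set T)) (H : set (set U))
    (f : T -> U) :
  sigma_algebra setT S -> (forall V, H V -> S (f @^-1` V)) ->
  forall A, <<s H >> A -> S (f @^-1` A).
Proof.
move=> sS HS A HA.
suff : image_set_system setT f S A by rewrite /image_set_system /= setTI.
apply: (smallest_sub (sigma_algebra_image f sS)) HA => V /HS.
by rewrite /image_set_system /= setTI.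
Qed.

Lemma bigcup_subset_cover (T I : Type) (A : set T) (B : I -> set T) :
  (forall y, A y -> exists2 i, B i y & B i `<=` A) ->
  A = \bigcup_(i in [set i | B i `<=` A]) B i.
Proof.
move=> hA; apply/seteqP; split => [y /hA[i Biy BiA]|y [i BiA /BiA//]].
by exists i.
Qed.

Lemma exists_natSinv_lt (R : realType) (I : finType) (e : I -> R) :
  (forall i, 0 < e i) -> exists n, forall i, n.+1%:R^-1 < e i.
Proof.
move=> e0; near \oo => N; exists N; near: N.
apply: filter_forall => i.
exact: (near_infty_natSinv_lt (interval_inference.PosNum (e0 i))).
Unshelve. all: by end_near. Qed.

Lemma image_scale_preimage (R : fieldType) (X : lmodType R) (t : R) (A : set X) :
  t != 0 ->
  (fun x => t *: x) @` A = (fun x => t^-1 *: x) @^-1` A.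
Proof.
move=> t0; apply/seteqP; split => [_ [a Aa <-]|z Az].
  by rewrite /= scalerA mulVf // scale1r.
by exists (t^-1 *: z) => //; rewrite scalerA mulfV // scale1r.
Qed.

Section LinearFunctional.
Variables (R : pzRingType) (X : lmodType R) (f : X -> R).
Hypothesis flin : forall a x y, f (a *: x + y) = a * f x + f y.

Lemma linfun0 : f 0 = 0.
Proof.
have := flin 1 0 0; rewrite scaler0 addr0 mul1r => h.
by apply: (@addrI _ (f 0)); rewrite addr0 -h.
Qed.

Lemma linfunZ a x : f (a *: x) = a * f x.
Proof. by rewrite -[a *: x]addr0 flin linfun0 addr0. Qed.

Lemma linfunB x y : f (x - y) = f x - f y.
Proof. by rewrite addrC -scaleN1r flin mulN1r addrC. Qed.

End LinearFunctional.

Section ScaleSet.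
Variables (R : realType) (X : lmodType R) (C : set X).

Lemma scale_setZ a c z : scale_set a C z -> scale_set (c * a) C (c *: z).
Proof. by case=> w Cw <-; exists w => //; rewrite scalerA. Qed.

Hypothesis Csym : symmetric_set C.

Lemma scale_setN s z : scale_set s C z -> scale_set s C (- z).
Proof. by case=> c Cc <-; exists (- c); [exact: Csym | rewrite scalerN]. Qed.

Lemma scale_set_normZ t a z : scale_set a C z -> scale_set (`|t| * a) C (t *: z).
Proof.
move=> Cz; have [t0|t0] := lerP 0 t; first by rewrite ger0_norm //; exact: scale_setZ.
by rewrite ltr0_norm // -[t *: z]opprK -scalerN -scaleNr; exact/scale_setZ/scale_setN.
Qed.

Hypothesis Ccvx : convex_set C.

Lemma scale_setD s t z w : 0 < s -> 0 < t ->
  scale_set s C z -> scale_set t C w -> scale_set (s + t) C (z + w).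
Proof.
move=> s0 t0 [c Cc <-] [c' Cc' <-].
have st0 : 0 < s + t by rewrite addr_gt0.
exists ((s / (s + t)) *: c + (1 - s / (s + t)) *: c').
  apply: Ccvx => //; first by rewrite divr_ge0 // ltW.
  by rewrite ler_pdivrMr // mul1r lerDl ltW.
rewrite scalerDr !scalerA mulrCA mulfV ?mulr1 ?gt_eqF //.
congr (_ + _); congr (_ *: _).
by rewrite mulrBr mulr1 mulrCA mulfV ?mulr1 ?gt_eqF // addrC addKr.
Qed.

Hypothesis C0 : C 0.

Lemma scale_set_le s t z : 0 < s -> s <= t -> scale_set s C z -> scale_set t C z.
Proof.
move=> s0 st [c Cc <-].
have t0 : 0 < t by apply: lt_le_trans st.
exists ((s / t) *: c + (1 - s / t) *: 0).
  apply: Ccvx => //; first by rewrite divr_ge0 // ltW.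
  by rewrite ler_pdivrMr // mul1r.
by rewrite scaler0 addr0 scalerA mulrCA mulfV ?mulr1 // gt_eqF.
Qed.

Hypothesis Cao : alg_open C.

Lemma scale_set_absorbing z : exists2 t, 0 < t & scale_set t C z.
Proof.
have [e e0 he] := Cao z C0.
have e20 : 0 < e / 2 by rewrite divr_gt0.
have Cz : C (0 + (e / 2) *: z).
  by apply: he; rewrite gtr0_norm // ltr_pdivrMr // ltr_pMr // ltr1n.
exists (e / 2)^-1; first by rewrite invr_gt0.
by exists (0 + (e / 2) *: z) => //; rewrite add0r scalerA mulVf ?scale1r // gt_eqF.
Qed.

Lemma scale_set_lt t z : 0 < t -> scale_set t C z ->
  exists2 s, 0 < s < t & scale_set s C z.
Proof.
move=> t0 [c Cc <-].
have [e e0 he] := Cao c Cc.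
have e20 : 0 < e / 2 by rewrite divr_gt0.
have Cc' : C (c + (e / 2) *: c).
  by apply: he; rewrite gtr0_norm // ltr_pdivrMr // ltr_pMr // ltr1n.
have k0 : 0 < 1 + e / 2 by rewrite addr_gt0.
exists (t / (1 + e / 2)).
  by rewrite divr_gt0 //= ltr_pdivrMr // ltr_pMr // ltrDl.
exists (c + (e / 2) *: c) => //.
by rewrite -{1}(scale1r c) -scalerDl scalerA -mulrA mulVf ?mulr1 // gt_eqF.
Qed.

Lemma scale_set_minkowski t z : minkowski C z < t -> scale_set t C z.
Proof.
rewrite /minkowski => /inf_lt[]; first by have [s s0 hs] := scale_set_absorbing z; exists s.
by move=> s [s0 hs] st; exact: scale_set_le s0 (ltW st) hs.
Qed.

End ScaleSet.

Lemma countable_enum (T : zmodType) (D : set T) : countable D ->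
  exists g : nat -> T, D `<=` range g.
Proof.
move=> /ocard_geP[g]; exists (fun n => odflt 0 (g n)) => d Dd.
have [n _ gn] := 'surj_g (ex_intro2 _ _ d Dd erefl).
by exists n => //; rewrite gn.
Qed.

Section Family.
Variables (R : realType) (X : lmodType R) (CC : set (set X)).
Hypothesis hCC : forall C, CC C ->
  [/\ symmetric_set C, alg_open C, convex_set C, C 0 & tauC_separable C].

Lemma translate_bigcapE (x : X) r (Cs : 'I_r -> set X) (l : 'I_r -> R) :
  [set x + y | y in \bigcap_(i in [set: 'I_r]) scale_set (l i) (Cs i)] =
  [set w | forall i, scale_set (l i) (Cs i) (w - x)].
Proof.
apply/seteqP; split => [_ [y hy <-] i|w hw].
  by rewrite addrC addKr; exact: hy.
by exists (w - x); [move=> i _; exact: hw | rewrite addrC subrK].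
Qed.

Lemma Cfam_FC x V : Cfam CC x V -> FC CC V.
Proof. by move=> hV; apply: sub_sigma_algebra; exists x. Qed.

Lemma dense_seq C : CC C ->
  exists g : nat -> X, forall x e, 0 < e -> exists n, scale_set e C (x - g n).
Proof.
move=> /hCC[_ Cao Ccvx C0 [D [cD hD]]].
have [g Dg] := countable_enum cD.
exists g => x e e0; have [d Dd hd] := hD x e e0.
have [n _ gn] := Dg d Dd.
by exists n; rewrite gn; exact: scale_set_minkowski.
Qed.

Section Gauge.
Variables (r : nat) (Cs : 'I_r -> set X) (l : 'I_r -> R).
Hypotheses (hCs : forall i, CC (Cs i)) (hl : forall i, 0 < l i).

Definition gauge_ball (c : 'I_r -> X) (n : nat) : set X :=
  [set z | forall i, scale_set (n.+1%:R^-1 * l i) (Cs i) (z - c i)].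

Lemma gauge_radius_gt0 n i : 0 < n.+1%:R^-1 * l i.
Proof. by rewrite mulr_gt0 // invr_gt0 ltr0n. Qed.

Lemma gauge_ball_FC c n : FC CC (gauge_ball c n).
Proof.
have -> : gauge_ball c n =
    \bigcap_i [set z | scale_set (n.+1%:R^-1 * l i) (Cs i) (z - c i)].
  by apply/seteqP; split => z hz i; [move=> _; exact: hz | exact: hz i I].
apply: sigma_algebra_countable_bigcap => i; apply: (@Cfam_FC (c i)).
exists 1%N, (fun=> Cs i), (fun=> n.+1%:R^-1 * l i).
split=> [_|]; first exact: hCs.
split=> [_|]; first exact: gauge_radius_gt0.
by rewrite translate_bigcapE; apply/seteqP; split => z hz; [move=> _ | exact: hz ord0].
Qed.

Lemma gauge_ball_double y c n :
  gauge_ball c n.*2.+1 y -> gauge_ball c n.*2.+1 `<=` gauge_ball (fun=> y) n.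
Proof.
move=> hy z hz i; have [Csym _ Ccvx _ _] := hCC (hCs i).
have -> : z - y = (z - c i) + - (y - c i) by rewrite opprB addrA subrK.
have -> : n.+1%:R^-1 * l i = n.*2.+2%:R^-1 * l i + n.*2.+2%:R^-1 * l i.
  by rewrite -mulrDl -doubleS -muln2 natrM invfM -splitr.
exact: (scale_setD Ccvx (gauge_radius_gt0 n.*2.+1 i) (gauge_radius_gt0 n.*2.+1 i) (hz i)
  (scale_setN Csym (hy i))).
Qed.

Lemma gauge_grid : exists G : 'I_r -> nat -> X,
  forall y n, exists k : {ffun 'I_r -> nat}, gauge_ball (fun i => G i (k i)) n y.
Proof.
have [G hG] := choice (fun i => dense_seq (hCs i)).
exists G => y n; have [k hk] := choice (fun i => hG i y _ (gauge_radius_gt0 n i)).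
by exists [ffun i => k i] => i; rewrite ffunE.
Qed.

Lemma FC_gauge_open (A : set X) :
  (forall y, A y -> exists n, gauge_ball (fun=> y) n `<=` A) -> FC CC A.
Proof.
move=> hA; have [G hG] := gauge_grid.
pose B (t : {ffun 'I_r -> nat} * nat) := gauge_ball (fun i => G i (t.1 i)) t.2.
rewrite (@bigcup_subset_cover _ _ A B).
  by apply: sigma_algebra_countable_bigcup => t _; exact: gauge_ball_FC.
move=> y /hA[n hn]; have [k hk] := hG y n.*2.+1.
by exists (k, n.*2.+1) => //; exact: subset_trans (gauge_ball_double hk) hn.
Qed.

Lemma prod_sigma_gauge_open (A : set (X * X)) :
  (forall u v, A (u, v) ->
     exists n, gauge_ball (fun=> u) n `*` gauge_ball (fun=> v) n `<=` A) ->
  prod_sigma (FC CC) (FC CC) A.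
Proof.
move=> hA; have [G hG] := gauge_grid.
pose B (t : {ffun 'I_r -> nat} * {ffun 'I_r -> nat} * nat) :=
  gauge_ball (fun i => G i (t.1.1 i)) t.2 `*` gauge_ball (fun i => G i (t.1.2 i)) t.2.
rewrite (@bigcup_subset_cover _ _ A B).
  apply: sigma_algebra_countable_bigcup => t _; apply: sub_sigma_algebra.
  exists (gauge_ball (fun i => G i (t.1.1 i)) t.2); first exact: gauge_ball_FC.
  by exists (gauge_ball (fun i => G i (t.1.2 i)) t.2); first exact: gauge_ball_FC.
move=> [u v] /hA[n hn].
have [k1 hk1] := hG u n.*2.+1; have [k2 hk2] := hG v n.*2.+1.
exists (k1, k2, n.*2.+1) => // -[z z'] [hz hz']; apply: hn.
by split; [exact: gauge_ball_double hk1 _ hz | exact: gauge_ball_double hk2 _ hz'].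
Qed.

End Gauge.

Lemma FC_preimage_open_linear (f : X -> R) :
  (forall a x y, f (a *: x + y) = a * f x + f y) ->
  tau_nbhs CC 0 [set y | `|f y - f 0| < 1] ->
  forall U, open U -> FC CC (f @^-1` U).
Proof.
move=> flin [_ [r [Cs [l [hCs [hl ->]]]]] hV] U oU.
apply: (FC_gauge_open hCs hl) => y Uy.
have /nbhs_ballP[e e0 he] : nbhs (f y) U by apply: open_nbhs_nbhs.
have [n hn] := @exists_natSinv_lt _ unit (fun=> e) (fun=> e0).
exists n => z hz; apply/he; rewrite -ball_normE /= distrC -linfunB //.
have n0 : 0 < n.+1%:R :> R by rewrite ltr0n.
have : `|f (n.+1%:R *: (z - y)) - f 0| < 1.
  apply: hV; rewrite translate_bigcapE => i; rewrite subr0.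
  by have := scale_setZ n.+1%:R (hz i); rewrite mulrA mulfV ?mul1r // gt_eqF.
rewrite linfun0 // subr0 linfunZ // normrM gtr0_norm // -ltr_pdivlMl // mulr1.
by move=> /lt_trans; apply; exact: hn tt.
Qed.

Lemma prod_sigma_preimage_add (A : set X) : FC CC A ->
  prod_sigma (FC CC) (FC CC) [set p : X * X | A (p.1 + p.2)].
Proof.
apply: (preimage_smallest_sigma (f := fun p : X * X => p.1 + p.2)).
  exact: smallest_sigma_algebra.
move=> _ [x _ [r [Cs [l [hCs [hl ->]]]]]]; rewrite translate_bigcapE.
apply: (prod_sigma_gauge_open hCs hl) => u v /= huv.
have /choice[s hs] : forall i, exists s, 0 < s < l i /\ scale_set s (Cs i) (u + v - x).
  move=> i; have [_ Cao _ _ _] := hCC (hCs i).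
  by have [s ? ?] := scale_set_lt Cao (hl i) (huv i); exists s.
(* Two radii (n+1)^-1 l_i must fit into the margin l_i - s_i. *)
have [n hn] : exists n, forall i, n.+1%:R^-1 < (l i - s i) / (2 * l i).
  apply: exists_natSinv_lt => i; have [/andP[_ sl] _] := hs i.
  by rewrite divr_gt0 ?mulr_gt0 ?subr_gt0.
exists n => -[z z'] [/= hz hz'] i.
have [_ _ Ccvx C0 _] := hCC (hCs i); have [/andP[s0 sl] hsi] := hs i.
have rho0 := gauge_radius_gt0 hl n i.
have -> : z + z' - x = (z - u) + (z' - v) + (u + v - x).
  by rewrite [z - u + _]addrACA -opprD -[RHS]addrA addKr.
have := scale_setD Ccvx (addr_gt0 rho0 rho0) s0
  (scale_setD Ccvx rho0 rho0 (hz i) (hz' i)) hsi.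
move=> /(scale_set_le Ccvx C0); apply; first by rewrite !addr_gt0.
move: (hn i); rewrite ltr_pdivlMr ?mulr_gt0 // mulrCA.
set rho := n.+1%:R^-1 * l i; lra.
Qed.

Lemma Cfam_scale t x V : t != 0 -> Cfam CC x V ->
  Cfam CC (t *: x) ((fun z => t^-1 *: z) @^-1` V).
Proof.
move=> t0 [r [Cs [l [hCs [hl ->]]]]].
exists r, Cs, (fun i => `|t| * l i); split => //; split.
  by move=> i; rewrite mulr_gt0 ?normr_gt0.
rewrite !translate_bigcapE; apply/seteqP; split => w /= hw i;
  have [Csym _ _ _ _] := hCC (hCs i).
  by have := scale_set_normZ Csym t (hw i); rewrite scalerBr scalerA mulfV // scale1r.
have := scale_set_normZ Csym t^-1 (hw i).
by rewrite scalerBr scalerA mulVf // scale1r mulrA normfV mulVf ?mul1r ?normr_eq0.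
Qed.

Lemma FC_scale t A : t != 0 -> FC CC A -> FC CC ((fun x => t *: x) @` A).
Proof.
move=> t0; rewrite image_scale_preimage //; apply: preimage_smallest_sigma.
  exact: smallest_sigma_algebra.
by move=> V [x _ hV]; exact: Cfam_FC (Cfam_scale t0 hV).
Qed.

End Family.

Theorem proposition4p4 (R : realType) (X : lmodType R) (CC : set (set X))
  (hCC : forall C, CC C ->
     [/\ symmetric_set C, alg_open C, convex_set C, C 0 & tauC_separable C]) :
  (* (LM1) *)
  (forall x : X, exists B : set (set X),
     (forall V, B V -> FC CC V /\ tau_nbhs CC x V) /\
     (forall W, tau_nbhs CC x W -> exists2 V, B V & V `<=` W)) /\
  (* (LM2) *)
  (forall f : X -> R,
     (forall (a : R) (x y : X), f (a *: x + y) = a * f x + f y) ->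
     (forall (x : X) (e : R), 0 < e -> tau_nbhs CC x [set y | `|f y - f x| < e]) ->
     forall B : set R, borelR B -> FC CC (f @^-1` B)) /\
  (* (LM3) *)
  (forall A : set X, FC CC A ->
     prod_sigma (FC CC) (FC CC) [set p : X * X | A (p.1 + p.2)]) /\
  (* (LM4) *)
  (forall t : R, t != 0 ->
     [set (fun x : X => t *: x) @` A | A in FC CC] = FC CC).
Proof.
split.
  move=> x; exists (Cfam CC x); split => [V hV|W [V hV VW]]; last by exists V.
  by split; [exact: Cfam_FC hV | exists V].
split.
  move=> f flin fcont; apply: preimage_smallest_sigma.
    exact: smallest_sigma_algebra.
  exact: FC_preimage_open_linear flin (fcont 0 1 ltr01).
split; first exact: prod_sigma_preimage_add.
move=> t t0; apply/seteqP; split => [_ [A hA <-]|B hB]; first exact: FC_scale.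
exists ((fun x => t^-1 *: x) @` B); first by apply: FC_scale; rewrite ?invr_eq0.
rewrite image_comp (_ : _ \o _ = id) ?image_id //.
by apply/funext => z /=; rewrite scalerA mulfV // scale1r.
Qed.
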